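(* Let $\tau\ge1$, two candidates $P,Q$, and let $Z^*$ be a point of the metric space minimizing $SC$. If $P$ beats $Q$ under Weighted Majority Rule 3 and $\delta_I=SC(P)/SC(Q)>\tau$, then $SC(P)/SC(Z^* )\le\frac{2\delta_I}{\delta_I-\tau}$.
   Context: Voters $N$ and candidates are points of an arbitrary metric space $(X,d)$; $SC(Y)=\sum_{i\in N}d(i,Y)$ for $Y\in X$. Let $A=\{i: d(i,Q)/d(i,P)\ge\tau\}$ and $B=\{j: d(j,P)/d(j,Q)\ge\tau\}$. Weighted Majority Rule 3 selects $P$ over $Q$ iff $|A|\ge|B|$. *)

From HB Require Import structures.
From mathcomp Require Import all_boot all_order all_algebra.
Set Implicit Arguments. Unset Strict Implicit. Unset Printing Implicit Defensive.
Import Order.TTheory GRing.Theory Num.Theory.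
Local Open Scope ring_scope.

Definition is_metric (R : realFieldType) (X : Type) (d : X -> X -> R) : Prop :=
  [/\ forall x y, 0 <= d x y,
      forall x y, d x y = 0 <-> x = y,
      forall x y, d x y = d y x &
      forall x y z, d x z <= d x y + d y z].

Definition SC (R : realFieldType) (X : Type) (d : X -> X -> R)
  (N : finType) (loc : N -> X) (Y : X) : R :=
  \sum_(i : N) d (loc i) Y.

(* A = { i : d(i,Q)/d(i,P) >= tau }, with the ratio read as +infinity when
   d(i,P) = 0 (cleared denominators). *)
Definition setA (R : realFieldType) (X : Type) (d : X -> X -> R)
  (N : finType) (loc : N -> X) (tau : R) (P Q : X) : {set N} :=
  [set i | tau * d (loc i) P <= d (loc i) Q].

(* Weighted Majority Rule 3 selects P over Q iff |A| >= |B|, where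
   B = { j : d(j,P)/d(j,Q) >= tau } = setA with P and Q swapped. *)
Definition WMR3_selects (R : realFieldType) (X : Type) (d : X -> X -> R)
  (N : finType) (loc : N -> X) (tau : R) (P Q : X) : bool :=
  (#|setA d loc tau Q P| <= #|setA d loc tau P Q|)%N.

From HB Require Import structures.
From mathcomp Require Import all_boot all_order all_algebra.
From mathcomp Require Import lra.
Import Order.TTheory GRing.Theory Num.Theory.
Local Open Scope ring_scope.

(* Write D = d(Z,P) - d(Z,Q) for an arbitrary point Z and gap = max(D, 0).
   The triangle inequality gives, for every voter x,
     d(x,P) - tau d(x,Q) <= 2 d(x,Z) + gap [x in B] - gap [x in A],
   because voters of A satisfy d(x,P) - tau d(x,Q) <= 0 and D <= 2 d(x,Z),
   voters of B satisfy d(x,P) - tau d(x,Q) <= 2 d(x,Z) + D, and all other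
   voters have d(x,P) - tau d(x,Q) < 0.  Summing over voters and using
   |B| <= |A| (P beats Q) yields  SC(P) - tau SC(Q) <= 2 SC(Z)  for every Z.
   The theorem follows from this inequality by elementary algebra in the
   ratio delta = SC(P)/SC(Q). *)

Lemma sum_indicator (R : pzRingType) (N : finType) (S : {set N}) :
  \sum_(k : N) ((k \in S)%:R : R) = #|S|%:R.
Proof.
by rewrite -sumr_const [RHS]big_mkcond /=; apply: eq_bigr => k _; case: (k \in S).
Qed.

Section VoterBounds.
Variables (R : realFieldType) (X : Type) (d : X -> X -> R).
Hypothesis d_metric : is_metric d.
Variables (tau : R) (x z P Q : X).
Hypothesis tau_ge1 : 1 <= tau.

Let d_ge0 : forall a b, 0 <= d a b. Proof. by case: d_metric. Qed.
Let d_sym : forall a b, d a b = d b a. Proof. by case: d_metric. Qed.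
Let d_tri : forall a b c, d a c <= d a b + d b c. Proof. by case: d_metric. Qed.

Lemma setA_voter_excess : tau * d x P <= d x Q -> d x P - tau * d x Q <= 0.
Proof.
move=> xA; have xP : d x P <= tau * d x P by rewrite ler_peMl.
have xQ : d x Q <= tau * d x Q by rewrite ler_peMl.
lra.
Qed.

Lemma setA_voter_gap :
  tau * d x P <= d x Q -> d z P - d z Q <= 2 * d x z.
Proof.
move=> xA; have xPQ : d x P <= d x Q.
  by apply: le_trans xA; rewrite ler_peMl.
have := d_tri z x P; have := d_tri x z Q; rewrite (d_sym z x); lra.
Qed.

Lemma setB_voter_excess :
  tau * d x Q <= d x P -> d x P - tau * d x Q <= 2 * d x z + (d z P - d z Q).
Proof.
move=> xB; have xQ : d x Q <= tau * d x Q by rewrite ler_peMl.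
have := d_tri x z P; have := d_tri z x Q; rewrite (d_sym z x); lra.
Qed.

(* The per-voter bound, uniform in the sign of d(z,P) - d(z,Q):
   the gap max(d(z,P) - d(z,Q), 0) is paid by voters of B and refunded by
   voters of A. *)
Lemma voter_excess_bound :
  d x P - tau * d x Q <=
    2 * d x z + Num.max (d z P - d z Q) 0 * (tau * d x Q <= d x P)%R%:R
              - Num.max (d z P - d z Q) 0 * (tau * d x P <= d x Q)%R%:R.
Proof.
have dxz := d_ge0 x z.
have gap_ge0 : 0 <= Num.max (d z P - d z Q) 0 by rewrite le_max lexx orbT.
have gap_geD : d z P - d z Q <= Num.max (d z P - d z Q) 0.
  by rewrite le_max lexx.
case: (boolP (tau * d x Q <= d x P)) => xB;
  case: (boolP (tau * d x P <= d x Q)) => xA /=.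
- by have := setA_voter_excess xA; have := setA_voter_gap xA; lra.
- by have := setB_voter_excess xB; lra.
- have gap_le : Num.max (d z P - d z Q) 0 <= 2 * d x z.
    by rewrite ge_max setA_voter_gap //= mulr_ge0.
  by have := setA_voter_excess xA; lra.
- by rewrite -ltNge in xB; lra.
Qed.

End VoterBounds.

Lemma WMR3_cost_bound (R : realFieldType) (X : Type) (d : X -> X -> R)
  (N : finType) (loc : N -> X) (tau : R) (P Q Z : X) :
  is_metric d -> 1 <= tau -> WMR3_selects d loc tau P Q ->
  SC d loc P - tau * SC d loc Q <= 2 * SC d loc Z.
Proof.
move=> d_metric tau_ge1 PbeatsQ.
have gap0 : 0 <= Num.max (d Z P - d Z Q) 0 by rewrite le_max lexx orbT.
rewrite /SC mulr_sumr -sumrB.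
apply: le_trans; first by apply: ler_sum => k _; exact: voter_excess_bound.
have card_setA (U V : X) : \sum_(k : N) (tau * d (loc k) U <= d (loc k) V)%R%:R
                            = #|setA d loc tau U V|%:R :> R.
  by rewrite -sum_indicator; apply: eq_bigr => k _; rewrite inE.
have sizes : (#|setA d loc tau Q P|%:R : R) <= #|setA d loc tau P Q|%:R.
  by rewrite ler_nat.
rewrite sumrB big_split /= -!mulr_sumr !card_setA.
nra.
Qed.

Lemma ratio_bound (R : realFieldType) (p q z tau : R) :
  0 <= tau -> 0 <= q -> 0 <= z -> tau < p / q -> p - tau * q <= 2 * z ->
  p / z <= 2 * (p / q) / (p / q - tau).
Proof.
move=> tau0 q0 z0 tau_lt cost.
have qpos : 0 < q.
  rewrite lt0r q0 andbT; apply: contraTneq tau_lt => ->.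
  by rewrite invr0 mulr0 -leNgt.
set delta := p / q in tau_lt *.
have p_eq : p = delta * q by rewrite /delta divfK // gt_eqF.
have gap_pos : 0 < delta - tau by lra.
have [->|z_neq0] := eqVneq z 0.
  by rewrite invr0 mulr0 divr_ge0 //; lra.
have zpos : 0 < z by rewrite lt0r z_neq0.
rewrite ler_pdivrMr // mulrAC ler_pdivlMr // p_eq.
nra.
Qed.

Theorem mainTheorem17 (R : realFieldType) (X : Type) (d : X -> X -> R)
  (N : finType) (loc : N -> X) (tau : R) (P Q Zstar : X) :
  is_metric d ->
  1 <= tau ->
  (forall Y : X, SC d loc Zstar <= SC d loc Y) ->
  WMR3_selects d loc tau P Q ->
  tau < SC d loc P / SC d loc Q ->
  SC d loc P / SC d loc Zstar <=
    2 * (SC d loc P / SC d loc Q) / (SC d loc P / SC d loc Q - tau).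
Proof.
move=> d_metric tau_ge1 _ PbeatsQ tau_lt.
have SC_ge0 Y : 0 <= SC d loc Y.
  by apply: sumr_ge0 => i _; case: d_metric.
apply: ratio_bound => //; first lra.
exact: WMR3_cost_bound.
Qed.
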